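(* Let $k\ge2$ and let $(L,b,f)$ be an even $\Phi_{2^k}$-lattice such that the isometry $D_f$ of $D_L$ has order at most $2^{k-2}$. Then $\delta_L=0$.
   Context: A $\Phi_{n}$-lattice is a $\mathbb{Z}$-lattice $(L,b)$ with an isometry $f$ with $\Phi_n(f)=0$ ($\Phi_n$ the $n$-th cyclotomic polynomial). $D_L=L^\vee/L$ and $D_f$ is the induced isometry. Under these hypotheses $L$ is $2$-elementary, and for a $2$-elementary integral lattice, $\delta_L=0$ if $n(L^\vee)\subseteq\mathbb{Z}$ (i.e. $b(x,x)\in\mathbb{Z}$ for all $x\in L^\vee$) and $\delta_L=1$ otherwise. *)

From Stdlib Require Import ClassicalEpsilon.
From mathcomp Require Import all_boot all_order all_algebra all_field.
Set Implicit Arguments. Unset Strict Implicit. Unset Printing Implicit Defensive.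
Import Order.TTheory GRing.Theory Num.Theory.
Local Open Scope ring_scope.

(* A Z-lattice of rank r is modelled as Z^r (column vectors) with the
   bilinear form b(x,y) = x^T G y given by an integer Gram matrix G.
   The form extends to Q^r = L (x) Q via the same matrix over rat. *)

Definition ratmx (m n : nat) (A : 'M[int]_(m, n)) : 'M[rat]_(m, n) :=
  map_mx (fun z : int => z%:~R) A.

Definition intvec (m n : nat) (A : 'M[rat]_(m, n)) : Prop :=
  forall i j, A i j \is a Num.int.

Definition is_lattice (r : nat) (G : 'M[int]_r) : Prop :=
  G^T = G /\ \det G != 0.

Definition even_lattice (r : nat) (G : 'M[int]_r) : Prop :=
  forall x : 'cV[int]_r, (2%:Z %| (x^T *m G *m x) ord0 ord0)%Z.

Definition is_isometry (r : nat) (G F : 'M[int]_r) : Prop :=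
  F^T *m G *m F = G.

Definition mxpeval (r : nat) (p : {poly int}) (F : 'M[int]_r) : 'M[int]_r :=
  \sum_(i < size p) p`_i *: F ^+ i.

Definition in_dual (r : nat) (G : 'M[int]_r) (x : 'cV[rat]_r) : Prop :=
  forall y : 'cV[int]_r, intvec (x^T *m ratmx G *m ratmx y).

(* D_f^m = id on D_L = L^v / L *)
Definition Df_pow_id (r : nat) (G F : 'M[int]_r) (m : nat) : Prop :=
  forall x : 'cV[rat]_r, in_dual G x -> intvec ((ratmx F) ^+ m *m x - x).

Definition Df_order_le (r : nat) (G F : 'M[int]_r) (N : nat) : Prop :=
  exists m : nat, [/\ (0 < m)%N, (m <= N)%N & Df_pow_id G F m].

Definition delta (r : nat) (G : 'M[int]_r) : nat :=
  if excluded_middle_informative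
       (forall x : 'cV[rat]_r, in_dual G x -> intvec (x^T *m ratmx G *m x))
  then 0%N else 1%N.

From Stdlib Require Import ClassicalEpsilon.
From mathcomp Require Import all_boot all_order all_algebra all_field.
Set Implicit Arguments. Unset Strict Implicit. Unset Printing Implicit Defensive.
Import GRing.Theory Num.Theory.
Local Open Scope ring_scope.

(* Since Phi_(2^k) = X^(2^(k-1)) + 1, f^(2^(k-1)) = -1 and D_f^(2^k) = id; the
   order of D_f divides 2^k and is at most 2^(k-2), so g := f^(2^(k-2)) acts
   trivially on D_L while g^2 = -1.  For x in L^v, y := g x - x then lies in L,
   and g being an isometry with g^2 = -1 forces b(g x, x) + b(x, g x) = 0,
   whence b(y, y) = 2 b(x, x).  As L is even, b(x, x) is an integer. *)

Lemma ratmxM m n p (A : 'M[int]_(m, n)) (B : 'M[int]_(n, p)) :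
  ratmx (A *m B) = ratmx A *m ratmx B.
Proof. by rewrite /ratmx map_mxM. Qed.

Lemma ratmxT m n (A : 'M[int]_(m, n)) : ratmx A^T = (ratmx A)^T.
Proof. by rewrite /ratmx map_trmx. Qed.

Lemma ratmx1 n : ratmx (1 : 'M[int]_n) = 1.
Proof. by rewrite /ratmx map_mx1. Qed.

Lemma ratmxN m n (A : 'M[int]_(m, n)) : ratmx (- A) = - ratmx A.
Proof. by rewrite /ratmx map_mxN. Qed.

Lemma ratmxX n (A : 'M[int]_n) e : ratmx (A ^+ e) = ratmx A ^+ e.
Proof.
elim: e => [|e IH]; first by rewrite !expr0 ratmx1.
by rewrite !exprS -!mulmxE ratmxM IH.
Qed.

Lemma intvecD m n (A B : 'M[rat]_(m, n)) : intvec A -> intvec B -> intvec (A + B).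
Proof. by move=> hA hB i j; rewrite mxE rpredD. Qed.

Lemma intvecN m n (A : 'M[rat]_(m, n)) : intvec A -> intvec (- A).
Proof. by move=> hA i j; rewrite mxE rpredN. Qed.

Lemma intvecM m n p (A : 'M[rat]_(m, n)) (B : 'M[rat]_(n, p)) :
  intvec A -> intvec B -> intvec (A *m B).
Proof. by move=> hA hB i j; rewrite mxE rpred_sum // => l _; rewrite rpredM. Qed.

Lemma intvec_ratmx m n (A : 'M[int]_(m, n)) : intvec (ratmx A).
Proof. by move=> i j; rewrite mxE intr_int. Qed.

Lemma intvecP m n (A : 'M[rat]_(m, n)) : intvec A -> {B | A = ratmx B}.
Proof.
move=> hA; exists (\matrix_(i, j) Num.floor (A i j)).
by apply/matrixP => i j; rewrite !mxE floorK.
Qed.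

Lemma divisors_2powS j :
  perm_eq (rem (2 ^ j.+1)%N (divisors (2 ^ j.+1))) (divisors (2 ^ j)).
Proof.
have pr2 : prime 2 by [].
apply: uniq_perm; rewrite ?rem_uniq ?divisors_uniq // => d.
rewrite mem_rem_uniq ?divisors_uniq // inE /= -!dvdn_divisors ?expn_gt0 //.
apply/andP/idP => [[ne /(dvdn_pfactor _ _ pr2) [i le_ij dE]] | dv_d].
  rewrite dE dvdn_exp2l // -ltnS ltn_neqAle le_ij andbT.
  by apply: contra ne => /eqP ij; rewrite dE ij.
split; last by rewrite expnS dvdn_mull.
by apply: contraTneq (dvdn_leq (expn_gt0 2 j) dv_d) => ->; rewrite leq_exp2l // ltnn.
Qed.

Lemma Cyclotomic_2powS j : 'Phi_(2 ^ j.+1) = 'X^(2 ^ j) + 1.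
Proof.
have prodS := prod_Cyclotomic (expn_gt0 2 j.+1).
rewrite (big_rem (2 ^ j.+1)%N) ?divisors_id ?expn_gt0 //= in prodS.
rewrite (perm_big _ (divisors_2powS j)) /= (prod_Cyclotomic (expn_gt0 2 j)) in prodS.
have nz : ('X^(2 ^ j) - 1 : {poly int}) != 0.
  by rewrite -size_poly_eq0 size_XnsubC ?expn_gt0.
apply: (mulIf nz).
by rewrite prodS mulrC -subr_sqr -exprM -expnSr expr1n.
Qed.

Lemma mxpeval_XnaddC1 r (F : 'M[int]_r) n : (0 < n)%N ->
  mxpeval ('X^n + 1) F = F ^+ n + 1.
Proof.
case: n => // n _; rewrite /mxpeval size_XnaddC // big_ord_recr big_ord_recl /=.
rewrite big1 => [|i _]; last first.
  by rewrite coefD coefXn coefC /bump /= add1n eqSS ltn_eqF ?addr0 ?scale0r.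
by rewrite !coefD !coefXn !coef1 /= eqxx add0r !addr0 !scale1r expr0 addrC.
Qed.

Lemma dvdn_pexp_leq p n j d : prime p ->
  (d %| p ^ n)%N -> (d <= p ^ j)%N -> (d %| p ^ j)%N.
Proof.
move=> pr_p /(dvdn_pfactor _ _ pr_p) [i _ ->].
by rewrite leq_exp2l ?prime_gt1 // => le_ij; rewrite dvdn_exp2l.
Qed.

Section DfPowers.

Variables (r : nat) (G F : 'M[int]_r).

Lemma Df_pow_id0 : Df_pow_id G F 0.
Proof. by move=> x _ i j; rewrite expr0 mul1mx subrr mxE rpred0. Qed.

Lemma Df_pow_idD a b :
  Df_pow_id G F a -> Df_pow_id G F b -> Df_pow_id G F (a + b).
Proof.
move=> Fa Fb x dx.
have -> : ratmx F ^+ (a + b) *m x - x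
          = ratmx F ^+ a *m (ratmx F ^+ b *m x - x) + (ratmx F ^+ a *m x - x).
  by rewrite exprD -mulmxE mulmxBr mulmxA addrA subrK.
apply: intvecD _ (Fa _ dx); apply: intvecM _ (Fb _ dx).
by rewrite -ratmxX; apply: intvec_ratmx.
Qed.

(* No inverse of f is needed: f^(a-b) x - x = f^(a-b) (x - f^b x) + (f^a x - x). *)
Lemma Df_pow_idB a b : (b <= a)%N ->
  Df_pow_id G F a -> Df_pow_id G F b -> Df_pow_id G F (a - b).
Proof.
move=> le_ba Fa Fb x dx.
have -> : ratmx F ^+ (a - b) *m x - x
          = ratmx F ^+ (a - b) *m - (ratmx F ^+ b *m x - x) + (ratmx F ^+ a *m x - x).
  by rewrite opprB mulmxBr mulmxA mulmxE -exprD subnK // addrA subrK.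
apply: intvecD _ (Fa _ dx); apply: intvecM; last exact: intvecN (Fb _ dx).
by rewrite -ratmxX; apply: intvec_ratmx.
Qed.

Lemma Df_pow_idMn c d : Df_pow_id G F d -> Df_pow_id G F (c * d).
Proof.
move=> Fd; elim: c => [|c IH]; first by rewrite mul0n; apply: Df_pow_id0.
by rewrite mulSn; apply: Df_pow_idD.
Qed.

Lemma Df_pow_id_gcd a b :
  Df_pow_id G F a -> Df_pow_id G F b -> Df_pow_id G F (gcdn a b).
Proof.
move=> Fa Fb; have [-> | a_gt0] := posnP a; first by rewrite gcd0n.
case: (egcdnP b a_gt0) => ka kb Bezout _.
have -> : gcdn a b = (ka * a - kb * b)%N by rewrite Bezout addKn.
by apply: Df_pow_idB; [rewrite Bezout leq_addr | apply: Df_pow_idMn ..].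
Qed.

Lemma Df_pow_id_unity n : F ^+ n = 1 -> Df_pow_id G F n.
Proof. by move=> Fn x _; rewrite -ratmxX Fn ratmx1 mul1mx subrr => i j; rewrite mxE. Qed.

Lemma Df_pow_idX m n : Df_pow_id G F (m * n) -> Df_pow_id G (F ^+ m) n.
Proof. by move=> Fmn x dx; rewrite ratmxX -exprM; apply: Fmn. Qed.

End DfPowers.

Lemma is_isometryX r (G F : 'M[int]_r) n :
  is_isometry G F -> is_isometry G (F ^+ n).
Proof.
move=> isoF; elim: n => [|n IH]; first by rewrite /is_isometry expr0 trmx1 mul1mx mulmx1.
rewrite /is_isometry exprS -mulmxE trmx_mul !mulmxA.
by rewrite -(mulmxA _ F^T) -(mulmxA _ (F^T *m G)) isoF.
Qed.

(* The cross terms cancel: b(x, g x) = b(g x, g^2 x) = - b(g x, x). *)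
Lemma isometry_sqrN1_norm_sub (R : comPzRingType) r (Q g : 'M[R]_r) (x : 'cV[R]_r) :
  g^T *m Q *m g = Q -> g ^+ 2 = -1 ->
  (g *m x - x)^T *m Q *m (g *m x - x) = (x^T *m Q *m x) *+ 2.
Proof.
move=> isog gg.
have cross : x^T *m Q *m (g *m x) = - ((g *m x)^T *m Q *m x).
  rewrite -{1}isog trmx_mul !mulmxA -(mulmxA _ g g) mulmxE -expr2 gg.
  by rewrite mulmxN mulmx1 mulNmx.
have square : (g *m x)^T *m Q *m (g *m x) = x^T *m Q *m x.
  by rewrite trmx_mul !mulmxA -[_ *m g^T *m Q]mulmxA -[_ *m (g^T *m Q) *m g]mulmxA isog.
rewrite !mulmxBr linearB /= !mulmxBl square cross.
by rewrite opprK opprB addrCA addrK mulr2n.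
Qed.

Lemma even_lattice_norm_half_int r (G : 'M[int]_r) (y : 'cV[rat]_r) :
  even_lattice G -> intvec y ->
  ((y^T *m ratmx G *m y) ord0 ord0) / 2 \is a Num.int.
Proof.
move=> evG /intvecP [z ->]; have [c Ec] := dvdzP (evG z).
by rewrite -ratmxT -!ratmxM mxE Ec intrM mulfK ?intr_int ?pnatr_eq0.
Qed.

Lemma dual_norm_int r (G g : 'M[int]_r) :
  even_lattice G -> is_isometry G g -> g ^+ 2 = -1 -> Df_pow_id G g 1 ->
  forall x, in_dual G x -> intvec (x^T *m ratmx G *m x).
Proof.
move=> evG isog gg Dg x dx i j; rewrite !ord1.
have := even_lattice_norm_half_int evG (Dg x dx).
rewrite expr1 isometry_sqrN1_norm_sub; last by rewrite -ratmxX gg ratmxN ratmx1.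
  by rewrite mxE mulrDl -splitr.
by rewrite -!ratmxT -!ratmxM isog.
Qed.

Theorem corollary3p11 (k : nat) (hk : (2 <= k)%N) (r : nat) (G F : 'M[int]_r) :
  is_lattice G -> even_lattice G -> is_isometry G F ->
  mxpeval ('Phi_(2 ^ k)) F = 0 ->
  Df_order_le G F (2 ^ (k - 2)) ->
  delta G = 0%N.
Proof.
case: k hk => [|[|k]] // _ _ evG isoF PhiF [m [m_gt0 le_m Dm]].
rewrite subn2 /= in le_m.
rewrite Cyclotomic_2powS mxpeval_XnaddC1 ?expn_gt0 // in PhiF.
have FN1 : F ^+ (2 ^ k.+1) = -1 by apply/eqP; rewrite -addr_eq0 PhiF.
have D2k2 : Df_pow_id G F (2 ^ k.+2).
  by apply: Df_pow_id_unity; rewrite expnS mulnC exprM FN1 sqrrN expr1n.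
have D2k : Df_pow_id G F (2 ^ k).
  have dvd_g : (gcdn m (2 ^ k.+2) %| 2 ^ k)%N.
    apply: (dvdn_pexp_leq _ (dvdn_gcdr _ _)) => //.
    exact: leq_trans (dvdn_leq m_gt0 (dvdn_gcdl _ _)) le_m.
  have [c ->] := dvdnP dvd_g.
  exact/Df_pow_idMn/Df_pow_id_gcd.
rewrite /delta; case: excluded_middle_informative => // [[]].
apply: (dual_norm_int evG (is_isometryX (2 ^ k) isoF)) => //.
  by rewrite -exprM -expnSr FN1.
by apply: Df_pow_idX; rewrite muln1.
Qed.
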